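(* Let $\ell\in\mathbb N$ and let $\Gamma_2$ be a finite alphabet disjoint from $\Gamma_1=\{0,1,\mathsf{inc},\mathsf{dec}\}$. There is a pushdown automaton $A$ over $\Gamma_1\cup\Gamma_2$ with 3 states and a stack alphabet of two symbols such that the projection of $L(A)\cap L'_\ell$ onto the alphabet $\Gamma_2$ (erasing all letters of $\Gamma_1$) is exactly $(\Gamma_2)^{2^{2^\ell}}$.
   Context: A pushdown automaton has transitions labelled by a letter or $\epsilon$ and a stack operation (push a symbol, pop a symbol, or no operation); it accepts a word if there is a run from the initial state with empty stack reading the word and ending in a final state with empty stack. For a word $b_1\cdots b_\ell\in\{0,1\}^\ell$ let $\mathsf{val}(b_1\cdots b_\ell)=\sum_i b_i 2^{\ell-i}$. Interpret $\mathsf{inc}(n)=n+1$, $\mathsf{dec}(n)=n-1$ and $a(n)=n$ for $a\in\Gamma_2$. $L'_\ell$ is the set of words $n_0o_1n_1\cdots o_kn_k$ with $k\ge 0$, each $n_i\in\{0,1\}^\ell$, each $o_i\in\{\mathsf{inc},\mathsf{dec}\}\cup\Gamma_2$, such that $\mathsf{val}(n_i)=o_i(\mathsf{val}(n_{i-1}))$ for all $0<i\le k$, $n_0=0^\ell=n_k$, if $o_i=\mathsf{inc}$ then $n_{i-1}\ne 1^\ell$, and if $o_i=\mathsf{dec}$ then $n_{i-1}\ne 0^\ell$. *)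

From mathcomp Require Import all_boot.
Set Implicit Arguments. Unset Strict Implicit. Unset Printing Implicit Defensive.

Inductive G1 := B0 | B1 | Inc | Dec.

Definition letter (G2 : Type) := (G1 + G2)%type.

Inductive stack_op (S : Type) := Push of S | Pop of S | Nop.

Record pda (Q S A : Type) := Pda {
  init : Q;
  final : Q -> bool;
  (* trans q lab op q' : transition from q to q' labelled by letter/epsilon
     (lab = None means epsilon) with stack operation op *)
  trans : Q -> option A -> stack_op S -> Q -> bool
}.

Definition apply_op (S : eqType) (o : stack_op S) (st : seq S) : option (seq S) :=
  match o with
  | Push s => Some (s :: st)
  | Pop s => if st is s' :: t then (if s' == s then Some t else None) else None
  | Nop => Some st
  end.

Definition lab_word (A : Type) (lab : option A) (w : seq A) : seq A :=
  if lab is Some a then a :: w else w.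

(* run Q S A M q st w q' st' : there is a run from configuration (q, st)
   to (q', st') reading w (stack top = head of the list). *)
Inductive run (Q : Type) (S : eqType) (A : Type) (M : pda Q S A) :
    Q -> seq S -> seq A -> Q -> seq S -> Prop :=
  | run_nil q st : run M q st [::] q st
  | run_step q lab o q1 st st1 w q2 st2 :
      trans M q lab o q1 -> apply_op o st = Some st1 ->
      run M q1 st1 w q2 st2 -> run M q st (lab_word lab w) q2 st2.

Definition accepts (Q : Type) (S : eqType) (A : Type) (M : pda Q S A) (w : seq A) : Prop :=
  exists qf, final M qf /\ run M (init M) [::] w qf [::].

(* val(b_1...b_l) = sum_i b_i 2^(l-i)  (most significant bit first) *)
Definition bval (n : seq bool) : nat := foldl (fun acc (b : bool) => acc.*2 + b) 0 n.

Definition enc_bits (G2 : Type) (n : seq bool) : seq (letter G2) :=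
  [seq (inl (if b then B1 else B0) : letter G2) | b <- n].

Definition step_ok (G2 : Type) (l : nat) (o : letter G2) (prev next : seq bool) : bool :=
  match o with
  | inl Inc => (prev != nseq l true) && (bval next == (bval prev).+1)
  | inl Dec => (prev != nseq l false) && ((bval next).+1 == bval prev)
  | inr _ => bval next == bval prev
  | _ => false
  end.

Fixpoint steps_ok (G2 : Type) (l : nat) (prev : seq bool)
    (steps : seq (letter G2 * seq bool)) : bool :=
  match steps with
  | [::] => true
  | (o, n) :: t => step_ok l o prev n && steps_ok l n t
  end.

Definition Lprime (G2 : Type) (l : nat) (w : seq (letter G2)) : Prop :=
  exists (n0 : seq bool) (steps : seq (letter G2 * seq bool)),
    [/\ size n0 = l /\ all (fun p => size p.2 == l) steps,
        n0 = nseq l false,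
        last n0 (map snd steps) = nseq l false,
        steps_ok l n0 steps &
        w = enc_bits G2 n0 ++ flatten [seq p.1 :: enc_bits G2 p.2 | p <- steps]].

Definition proj2 (G2 : Type) (w : seq (letter G2)) : seq G2 :=
  pmap (fun a : letter G2 => if a is inr g then Some g else None) w.

From mathcomp Require Import all_boot zify.
Set Implicit Arguments. Unset Strict Implicit. Unset Printing Implicit Defensive.

(* The automaton performs a depth-first traversal of the complete binary tree
   of height 2^l, the counter of L'_l being the current depth: [inc] descends to
   a child pushing the edge symbol [sedge], [dec] climbs back popping it, and the
   two leaves below a node of depth 2^l - 1 are read as two letters of Gamma_2,
   so exactly 2^(2^l) of them are read.  Back from a child, the automaton reads
   the counter bits in phase [Turn]: a 0 bit shows that the node is not at depth
   2^l - 1 and pushes the marker [sright], so that the next [inc] enters the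
   right child; if [sright] is on top the node is finished and an epsilon move
   pops it.  Conversely, in an accepting run on a word of L'_l every
   configuration is a position of this traversal and determines how many
   letters of Gamma_2 have been read ([leaves_before]); this is proved backwards
   from the final configuration, using the forward invariant [depth_ok]. *)

Section Runs.
Variables (Q : Type) (S : eqType) (A : Type) (M : pda Q S A).

Lemma run_cat q st w1 q1 st1 w2 q2 st2 :
  run M q st w1 q1 st1 -> run M q1 st1 w2 q2 st2 -> run M q st (w1 ++ w2) q2 st2.
Proof.
elim=> // q0 lab o q3 st0 st3 w q4 st4 Ht Ha _ IH /IH Hr.
by case: lab Ht => [a|] Ht; exact: run_step Ht Ha Hr.
Qed.

Lemma run_cat_inv q st w1 w2 q2 st2 :
  run M q st (w1 ++ w2) q2 st2 ->
  exists q1 st1, run M q st w1 q1 st1 /\ run M q1 st1 w2 q2 st2.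
Proof.
move Ew: (w1 ++ w2) => w Hr.
elim: Hr w1 Ew => {q st w q2 st2} [q st|q lab o q0 st st0 w q2 st2 Ht Ha Hr IH]
  [|a w1] //= Ew.
- by exists q, st; rewrite Ew; split; exact: run_nil.
- by exists q, st; rewrite Ew; split; [exact: run_nil|exact: run_step Ht Ha Hr].
- case: lab Ht Ew => [b|] Ht /= Ew.
  + case: Ew Ht => -> /IH [q1 [st1 [H1 H2]]] Ht.
    by exists q1, st1; split=> //; exact: run_step Ht Ha H1.
  + have [q1 [st1 [H1 H2]]] := IH (a :: w1) Ew.
    by exists q1, st1; split=> //; exact: run_step Ht Ha H1.
Qed.

End Runs.

Lemma bval_foldl a n :
  foldl (fun acc (b : bool) => acc.*2 + b) a n = a * 2 ^ size n + bval n.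
Proof.
rewrite /bval; elim: n a => [|b n IH] a /=; first by rewrite muln1 addn0.
by rewrite IH [in RHS]IH expnS; lia.
Qed.

Lemma bval_cons b n : bval (b :: n) = b * 2 ^ size n + bval n.
Proof. by rewrite {1}/bval /= bval_foldl; case: b => /=; lia. Qed.

Lemma bval_rcons n b : bval (rcons n b) = (bval n).*2 + b.
Proof. by rewrite /bval foldl_rcons. Qed.

Lemma bval_ltn n : bval n < 2 ^ size n.
Proof. by elim: n => [|b n IH] //; rewrite bval_cons /= expnS; case: b => /=; lia. Qed.

Lemma bval_all n : all id n = ((bval n).+1 == 2 ^ size n).
Proof.
elim: n => [|b n IH] //; rewrite bval_cons /= expnS IH.
by have := bval_ltn n; case: b => /= ?; apply/eqP/eqP; lia.
Qed.

Lemma bval_nseq0 k : bval (nseq k false) = 0.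
Proof. by elim: k => [|k IH] //=; rewrite bval_cons. Qed.

Fixpoint bits_of (k v : nat) : seq bool :=
  if k is k'.+1 then rcons (bits_of k' v./2) (odd v) else [::].

Lemma size_bits_of k v : size (bits_of k v) = k.
Proof. by elim: k v => [|k IH] v //=; rewrite size_rcons IH. Qed.

Lemma bval_bits_of k v : v < 2 ^ k -> bval (bits_of k v) = v.
Proof.
elim: k v => [|k IH] v /=; first by rewrite expn0; case: v.
move=> Hv; rewrite bval_rcons IH; last by rewrite ltn_half_double -mul2n -expnS.
by rewrite -[RHS]odd_double_half addnC.
Qed.

Lemma bits_of0 k : bits_of k 0 = nseq k false.
Proof. by elim: k => [|k IH] //=; rewrite IH; elim: k {IH} => //= k ->. Qed.

Lemma expn_half m v : v < m -> 2 ^ (m - v) = (2 ^ (m - v.+1)).*2.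
Proof. by move=> Hv; rewrite -mul2n -expnS; congr (2 ^ _); lia. Qed.

Section Words.
Variable G2 : Type.

Definition steps_word (steps : seq (letter G2 * seq bool)) : seq (letter G2) :=
  flatten [seq p.1 :: enc_bits G2 p.2 | p <- steps].

Definition g2_of_step (p : letter G2 * seq bool) : option G2 :=
  if p.1 is inr g then Some g else None.

Lemma steps_word_cons o n steps :
  steps_word ((o, n) :: steps) = (o :: enc_bits G2 n) ++ steps_word steps.
Proof. by []. Qed.

Lemma proj2_cat (w1 w2 : seq (letter G2)) : proj2 (w1 ++ w2) = proj2 w1 ++ proj2 w2.
Proof. exact: pmap_cat. Qed.

Lemma proj2_enc_bits n : proj2 (enc_bits G2 n) = [::].
Proof. by elim: n => [|[] n IH]. Qed.

Lemma proj2_steps_word steps : proj2 (steps_word steps) = pmap g2_of_step steps.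
Proof.
elim: steps => [|[o n] steps IH] //.
by rewrite steps_word_cons proj2_cat IH; case: o => /= *; rewrite proj2_enc_bits.
Qed.

Lemma size_pmap_g2_cons o n steps :
  size (pmap g2_of_step ((o, n) :: steps)) =
  (if o is inr _ then 1 else 0) + size (pmap g2_of_step steps).
Proof. by case: o. Qed.

Lemma steps_ok_cat l n (s1 s2 : seq (letter G2 * seq bool)) :
  steps_ok l n (s1 ++ s2) = steps_ok l n s1 && steps_ok l (last n (map snd s1)) s2.
Proof. by elim: s1 n => [|[o n'] s1 IH] n //=; rewrite IH andbA. Qed.

Lemma steps_ok_cons l n (o : letter G2) n' s :
  steps_ok l n ((o, n') :: s) = step_ok l o n n' && steps_ok l n' s.
Proof. by []. Qed.

Lemma steps_word_cat (s1 s2 : seq (letter G2 * seq bool)) :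
  steps_word (s1 ++ s2) = steps_word s1 ++ steps_word s2.
Proof. by rewrite /steps_word map_cat flatten_cat. Qed.

End Words.

Inductive phase := Down | Turn | Up.

Definition phase_of (q : 'I_3) : phase :=
  match val q with 0 => Down | 1 => Turn | _ => Up end.

Definition state (p : phase) : 'I_3 :=
  match p with
  | Down => @Ordinal 3 0 isT
  | Turn => @Ordinal 3 1 isT
  | Up => @Ordinal 3 2 isT
  end.

Definition inert (p : phase) : bool := if p is Turn then false else true.

Definition sedge : 'I_2 := ord0.
Definition sright : 'I_2 := ord_max.

Lemma apply_pop (S : eqType) (s : S) st st' :
  apply_op (Pop s) st = Some st' -> st = s :: st'.
Proof. by case: st => //= s' st0; case: eqP => // -> [<-]. Qed.

(* The path [bs] lists the branch choices from the node up to the root, the top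
   of the stack first, so [node_index bs] is the rank of the node among the
   nodes of its depth. *)
Inductive encodes : seq 'I_2 -> seq bool -> Prop :=
  | encodes_nil : encodes [::] [::]
  | encodes_left st bs : encodes st bs -> encodes (sedge :: st) (false :: bs)
  | encodes_right st bs :
      encodes st bs -> encodes (sedge :: sright :: st) (true :: bs).

Definition node_index (bs : seq bool) : nat := foldr (fun (b : bool) i => b + i.*2) 0 bs.

Lemma encodes_edges st bs : encodes st bs -> count_mem sedge st = size bs.
Proof. by elim=> //= st0 bs0 _ ->. Qed.

Lemma encodes_right_top st bs : ~ encodes (sright :: st) bs.
Proof. by move=> H; inversion H. Qed.

Lemma encodes_edge_inv st bs : encodes (sedge :: st) bs ->
  (exists2 bs', bs = false :: bs' & encodes st bs') \/
  (exists st' bs', [/\ st = sright :: st', bs = true :: bs' & encodes st' bs']).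
Proof. by move=> H; inversion H; subst; [left; exists bs0|right; exists st0, bs0]. Qed.

Lemma sedge_neq_sright st st' : sedge :: st <> sright :: st'.
Proof. by case. Qed.

Section Machine.
Variable G2 : Type.

Definition bitl (b : bool) : letter G2 := inl (if b then B1 else B0).

Lemma enc_bits_cons b n : enc_bits G2 (b :: n) = bitl b :: enc_bits G2 n.
Proof. by []. Qed.

Definition dfs_trans (q : 'I_3) (lab : option (letter G2)) (o : stack_op 'I_2)
    (q' : 'I_3) : bool :=
  match phase_of q, lab, o, phase_of q' with
  | Down, Some (inl (B0 | B1)), Nop, Down => true
  | Up, Some (inl (B0 | B1)), Nop, Up => true
  | Turn, Some (inl B1), Nop, Turn => true
  | Turn, Some (inl B0), Push s, Down => s == sright
  | Down, Some (inl Inc), Push s, Down => s == sedge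
  | Up, Some (inl Dec), Pop s, Turn => s == sedge
  | Down, Some (inr _), Push s, Turn => s == sedge
  | Turn, Some (inr _), Pop s, Up => s == sedge
  | Turn, None, Pop s, Up => s == sright
  | _, _, _, _ => false
  end.

Definition dfs_pda : pda 'I_3 'I_2 (letter G2) :=
  Pda (state Down) (fun q => if phase_of q is Up then true else false) dfs_trans.

Local Notation run := (run dfs_pda).

Definition read_step q st (x : letter G2) q' st' :=
  exists2 o, dfs_trans q (Some x) o q' & apply_op o st = Some st'.

Definition eps_step (q : 'I_3) (st : seq 'I_2) (q' : 'I_3) st' :=
  [/\ phase_of q = Turn, phase_of q' = Up & st = sright :: st'].

Definition letter_step q st x q' st' :=
  read_step q st x q' st' \/
  exists q0 st0, eps_step q st q0 st0 /\ read_step q0 st0 x q' st'.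

Lemma read_bit q st b q' st' : read_step q st (bitl b) q' st' ->
  [\/ [/\ inert (phase_of q), phase_of q' = phase_of q & st' = st],
      [/\ phase_of q = Turn, phase_of q' = Turn, b & st' = st] |
      [/\ phase_of q = Turn, phase_of q' = Down, ~~ b & st' = sright :: st]].
Proof.
case=> o; rewrite /dfs_trans /bitl.
case: b; case: (phase_of q) (phase_of q') o => [] [] [s|s|] //=;
  try by move=> _ [<-]; first [by constructor 1 | by constructor 2].
by move=> /eqP-> [<-]; constructor 3.
Qed.

Lemma read_inc q st q' st' : read_step q st (inl Inc) q' st' ->
  [/\ phase_of q = Down, phase_of q' = Down & st' = sedge :: st].
Proof.
case=> o; rewrite /dfs_trans.
by case: (phase_of q) (phase_of q') o => [] [] [s|s|] //= /eqP-> [<-].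
Qed.

Lemma read_dec q st q' st' : read_step q st (inl Dec) q' st' ->
  [/\ phase_of q = Up, phase_of q' = Turn & st = sedge :: st'].
Proof.
case=> o; rewrite /dfs_trans.
by case: (phase_of q) (phase_of q') o => [] [] [s|s|] //= /eqP-> /apply_pop.
Qed.

Lemma read_g2 q st g q' st' : read_step q st (inr g) q' st' ->
  [/\ phase_of q = Down, phase_of q' = Turn & st' = sedge :: st] \/
  [/\ phase_of q = Turn, phase_of q' = Up & st = sedge :: st'].
Proof.
case=> o; rewrite /dfs_trans.
case: (phase_of q) (phase_of q') o => [] [] [s|s|] //= /eqP->.
- by move=> [<-]; left.
- by move/apply_pop; right.
Qed.

Lemma trans_eps_step q o q' st st' :
  dfs_trans q None o q' -> apply_op o st = Some st' -> eps_step q st q' st'.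
Proof.
rewrite /dfs_trans /eps_step.
by case: (phase_of q) (phase_of q') o => [] [] [s|s|] //= /eqP-> /apply_pop.
Qed.

Lemma step_bit_inert q st b q' st' : inert (phase_of q) ->
  letter_step q st (bitl b) q' st' -> phase_of q' = phase_of q /\ st' = st.
Proof.
move=> Hq; case=> [/read_bit[[_ -> ->]//|[Ht]|[Ht]]|[q0 [st0 [[Ht] _]]]];
  by rewrite Ht in Hq.
Qed.

Lemma step_bit_turn q st b q' st' : phase_of q = Turn ->
  letter_step q st (bitl b) q' st' ->
  [\/ [/\ b, phase_of q' = Turn & st' = st],
      [/\ ~~ b, phase_of q' = Down & st' = sright :: st] |
      phase_of q' = Up /\ st = sright :: st'].
Proof.
move=> Hq; case=> [/read_bit[[]|[_ -> Hb ->]|[_ -> Hb ->]]|[q0 [st0 [[_ Hq0 ->]]]]].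
- by rewrite Hq.
- by constructor 1.
- by constructor 2.
- case/read_bit=> [[_ -> ->]|[]|[]] //; try congruence.
  by constructor 3; rewrite Hq0.
Qed.

Lemma step_inc q st q' st' : letter_step q st (inl Inc) q' st' ->
  [/\ phase_of q = Down, phase_of q' = Down & st' = sedge :: st].
Proof. by case=> [/read_inc //|[q0 [st0 [[_ Hq0 _] /read_inc[]]]]]; congruence. Qed.

Lemma step_dec q st q' st' : letter_step q st (inl Dec) q' st' ->
  phase_of q' = Turn /\
  (phase_of q = Up /\ st = sedge :: st' \/
   phase_of q = Turn /\ st = sright :: sedge :: st').
Proof.
case=> [/read_dec[-> -> ->]|[q0 [st0 [[-> _ ->] /read_dec[_ -> ->]]]]];
  [by split=> //; left|by split=> //; right].
Qed.

Lemma step_g2 q st g q' st' : letter_step q st (inr g) q' st' ->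
  [/\ phase_of q = Down, phase_of q' = Turn & st' = sedge :: st] \/
  [/\ phase_of q = Turn, phase_of q' = Up & st = sedge :: st'].
Proof.
by case=> [/read_g2 //|[q0 [st0 [[_ Hq0 _] /read_g2[[]|[]]]]]]; congruence.
Qed.

Lemma run_nil_inv q st q' st' :
  run q st [::] q' st' -> q' = q /\ st' = st \/ eps_step q st q' st'.
Proof.
move Ew: [::] => w0 Hr.
elim: Hr Ew => [q0 st0 _|q0 [a|] o q1 st0 st1 w q2 st2 Ht Ha _ IH] //=; first by left.
move/IH=> [[-> ->]|[Hq1 _ _]]; first by right; exact: trans_eps_step Ht Ha.
by have [_ Hup _] := trans_eps_step Ht Ha; congruence.
Qed.

Lemma run_cons_inv q st x w q2 st2 : run q st (x :: w) q2 st2 ->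
  exists q1 st1, letter_step q st x q1 st1 /\ run q1 st1 w q2 st2.
Proof.
move Ew: (x :: w) => w' Hr.
elim: Hr x w Ew => // q0 [a|] o q1 st0 st1 w1 q3 st3 Ht Ha Hr IH x w /= Ew.
- by case: Ew Ht => -> -> Ht; exists q1, st1; split=> //; left; exists o.
- have [q4 [st4 [Hs Hr']]] := IH x w Ew.
  exists q4, st4; split=> //; right; exists q1, st1.
  split; first exact: trans_eps_step Ht Ha.
  have [_ Hup _] := trans_eps_step Ht Ha.
  by case: Hs => // [[q5 [st5 [[Hq1 _ _] _]]]]; congruence.
Qed.

Lemma run_read q st x o q1 st1 w q2 st2 :
  dfs_trans q (Some x) o q1 -> apply_op o st = Some st1 ->
  run q1 st1 w q2 st2 -> run q st (x :: w) q2 st2.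
Proof. exact: (@run_step _ _ _ dfs_pda q (Some x)). Qed.

Lemma run_bits_inert q st n q' st' : inert (phase_of q) ->
  run q st (enc_bits G2 n) q' st' -> phase_of q' = phase_of q /\ st' = st.
Proof.
elim: n q st => [|b n IH] q st Hq.
- by case/run_nil_inv=> [[-> ->] // | [Ht _ _]]; rewrite Ht in Hq.
- rewrite enc_bits_cons => /run_cons_inv[q1 [st1 [/(step_bit_inert Hq)[Hq1 ->]]]].
  by rewrite -Hq1 in Hq *; exact: IH.
Qed.

Lemma run_bits_turn q st n q' st' : phase_of q = Turn ->
  run q st (enc_bits G2 n) q' st' ->
  [\/ [/\ all id n, phase_of q' = Turn & st' = st],
      [/\ ~~ all id n, phase_of q' = Down & st' = sright :: st] |
      phase_of q' = Up /\ st = sright :: st'].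
Proof.
elim: n q st => [|b n IH] q st Hq.
- by case/run_nil_inv=> [[-> ->]|[_ -> ->]]; [constructor 1|constructor 3].
- rewrite enc_bits_cons => /run_cons_inv[q1 [st1 [/(step_bit_turn Hq)]]].
  case=> [[Hb Hq1 ->]|[Hb Hq1 ->]|[Hq1 ->]] Hr.
  + case: (IH _ _ Hq1 Hr) => [[Ha -> ->]|[Ha -> ->]|[-> ->]].
    * by constructor 1; rewrite /= Hb.
    * by constructor 2; rewrite /= Hb.
    * by constructor 3.
  + have := run_bits_inert _ Hr; rewrite Hq1 => /(_ isT)[-> ->].
    by constructor 2; rewrite /= (negbTE Hb).
  + have := run_bits_inert _ Hr; rewrite Hq1 => /(_ isT)[-> ->].
    by constructor 3.
Qed.

Lemma run_bits_stay p st n :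
  inert p -> run (state p) st (enc_bits G2 n) (state p) st.
Proof.
move=> Hp; elim: n => [|b n IH]; first exact: run_nil.
by rewrite enc_bits_cons; apply: (run_read (o := Nop _)) IH => //; case: p Hp; case: b.
Qed.

Lemma run_bits_turn_ones st n :
  all id n -> run (state Turn) st (enc_bits G2 n) (state Turn) st.
Proof.
elim: n => [|b n IH]; first by move=> _; exact: run_nil.
by rewrite enc_bits_cons /= => /andP[-> /IH]; apply: (run_read (o := Nop _)).
Qed.

Lemma run_bits_turn_zero st n :
  ~~ all id n -> run (state Turn) st (enc_bits G2 n) (state Down) (sright :: st).
Proof.
elim: n => [|[] n IH] //; rewrite enc_bits_cons /= => Hn.
- exact: (run_read (o := Nop _) _ _ (IH Hn)).
- by apply: (run_read (o := Push sright) _ _ (@run_bits_stay Down _ _ isT)).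
Qed.

Lemma run_bits_turn_pop st n :
  n != [::] -> run (state Turn) (sright :: st) (enc_bits G2 n) (state Up) st.
Proof.
case: n => [|b n] // _; rewrite enc_bits_cons.
apply: (@run_step _ _ _ dfs_pda _ None (Pop sright) (state Up)); rewrite /= ?eqxx //.
by apply: (run_read (o := Nop _) _ _ (@run_bits_stay Up _ _ isT)); case: b.
Qed.

Variable l : nat.
Local Notation N := (2 ^ l).

(* In phase [Down] with [sright] on top, the left subtree of the node is done
   and the next [inc] enters the right one. *)
Definition leaves_before (p : phase) (v : nat) (st : seq 'I_2) (x : nat) : Prop :=
  match p with
  | Down => exists2 bs, size bs = v &
      encodes st bs /\ x = node_index bs * 2 ^ (N - v) \/
      exists2 st', st = sright :: st' &
        encodes st' bs /\ x = node_index (true :: bs) * 2 ^ (N - v.+1)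
  | Turn => v.+1 = N /\ exists st' bs,
      [/\ st = sedge :: st', encodes st' bs, size bs = v & x = node_index (true :: bs)]
  | Up => exists bs,
      [/\ size bs = v, encodes st bs & x = (node_index bs).+1 * 2 ^ (N - v)]
  end.

(* Needed to discard configurations that precede traversal positions without
   being reachable from the initial one. *)
Definition depth_ok (p : phase) (v : nat) (st : seq 'I_2) : Prop :=
  match p with
  | Turn => v.+1 = N /\ v < count_mem sedge st
  | _ => v <= count_mem sedge st
  end.

Definition pulls_back p v st p' v' st' (k : nat) : Prop :=
  forall x', leaves_before p' v' st' x' -> exists2 x, leaves_before p v st x & x' = x + k.

Lemma block_inc q st n q' st' v : v.+1 < N -> depth_ok (phase_of q) v st ->
  run q st (inl Inc :: enc_bits G2 n) q' st' ->
  depth_ok (phase_of q') v.+1 st' /\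
  pulls_back (phase_of q) v st (phase_of q') v.+1 st' 0.
Proof.
move=> Hv Hd /run_cons_inv[q1 [st1 [/step_inc[Hq Hq1 ->] /run_bits_inert]]].
rewrite Hq1 => /(_ isT)[-> ->]; rewrite Hq /= in Hd *.
split=> [|x' [bs Hsz [[/encodes_edge_inv Henc ->]|[st2 /sedge_neq_sright //]]]];
  first lia.
case: Henc Hsz => [[bs' -> Henc]|[st'' [bs' [-> -> Henc]]]] [Hsz].
- exists (node_index bs' * 2 ^ (N - v)); last by rewrite (expn_half (ltnW Hv)) /=; lia.
  by exists bs' => //; left.
- exists (node_index (true :: bs') * 2 ^ (N - v.+1)); last by rewrite addn0.
  by exists bs' => //; right; exists st''.
Qed.

Lemma block_dec q st n q' st' v : v.+1 < N -> ~~ all id n ->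
  depth_ok (phase_of q) v.+1 st ->
  run q st (inl Dec :: enc_bits G2 n) q' st' ->
  depth_ok (phase_of q') v st' /\ pulls_back (phase_of q) v.+1 st (phase_of q') v st' 0.
Proof.
move=> Hv Hn Hd /run_cons_inv[q1 [st1 [/step_dec[Hq1 Hsrc] Hr]]].
case: (run_bits_turn Hq1 Hr) Hsrc => [[Ha]|[_ -> ->]|[-> ->]] Hsrc;
  first by rewrite Ha in Hn.
- case: Hsrc Hd => [[Hq ->]|[Hq ->]]; rewrite Hq /= => Hd.
  + split=> [|x' [bs Hsz [[/encodes_right_top //]|[st2 [<-] [Henc ->]]]]]; first lia.
    exists (node_index (true :: bs) * 2 ^ (N - v.+1)); last by rewrite addn0.
    by exists (false :: bs); split=> //=; [rewrite Hsz|exact: encodes_left].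
  + case: Hd => _ Hd.
    split=> [|x' [bs Hsz [[/encodes_right_top //]|[st2 [<-] [Henc _]]]]]; first lia.
    by exfalso; move: Hd; rewrite (encodes_edges Henc) Hsz; lia.
- case: Hsrc Hd => [[Hq ->]|[Hq ->]]; rewrite Hq /= => Hd.
  + split=> [|x' [bs [Hsz Henc ->]]]; first lia.
    exists ((node_index (true :: bs)).+1 * 2 ^ (N - v.+1)).
      by exists (true :: bs); split=> //=; [rewrite Hsz|exact: encodes_right].
    by rewrite (expn_half (ltnW Hv)) /=; lia.
  + case: Hd => _ Hd; split=> [|x' [bs [Hsz Henc _]]]; first lia.
    by exfalso; move: Hd; rewrite (encodes_edges Henc) Hsz; lia.
Qed.

Lemma block_g2 q st g n q' st' v : all id n = (v.+1 == N) ->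
  depth_ok (phase_of q) v st ->
  run q st (inr g :: enc_bits G2 n) q' st' ->
  depth_ok (phase_of q') v st' /\ pulls_back (phase_of q) v st (phase_of q') v st' 1.
Proof.
move=> Hn Hd /run_cons_inv[q1 [st1 [Hs Hr]]].
case: (step_g2 Hs) Hd Hr => [[Hq Hq1 ->]|[Hq Hq1 ->]] Hd Hr; rewrite Hq /= in Hd *.
- case: (run_bits_turn Hq1 Hr) => [[Ha -> ->]|[_ -> ->]|[_ /sedge_neq_sright //]].
  + move: Ha; rewrite Hn => /eqP HvN.
    split=> [|x' [_ [st2 [bs [[<-] Henc Hsz ->]]]]]; first by split=> //; lia.
    exists (node_index bs * 2 ^ (N - v)); first by exists bs => //; left.
    by rewrite -HvN subSnn /=; lia.
  + split=> [/=|x' [bs Hsz [[/encodes_right_top //]|[st2 [<-] [Henc _]]]]]; first lia.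
    by have := encodes_edges Henc; rewrite /= Hsz => Hc; exfalso; lia.
- have := run_bits_inert _ Hr; rewrite Hq1 => /(_ isT)[-> ->].
  case: Hd => HvN Hd; split=> [/=|x' [bs [Hsz Henc ->]]]; first lia.
  exists (node_index (true :: bs)); first by split=> //; exists st1, bs.
  by rewrite -HvN subSnn /=; lia.
Qed.

Lemma run_steps_leaves steps q st n qf :
  size n = l -> all (fun p => size p.2 == l) steps -> steps_ok l n steps ->
  last n (map snd steps) = nseq l false -> depth_ok (phase_of q) (bval n) st ->
  run q st (steps_word steps) qf [::] -> phase_of qf = Up ->
  exists2 x, leaves_before (phase_of q) (bval n) st x &
    x + size (pmap (@g2_of_step G2) steps) = 2 ^ N.
Proof.
elim: steps q st n => [|[o n'] steps IH] q st n Hn.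
- move=> _ _ /= -> Hd /run_nil_inv[[-> <-] Hqf|[Hq _ Hst]].
  + exists (2 ^ N); last by rewrite addn0.
    rewrite Hqf bval_nseq0; exists [::].
    by split; [|exact: encodes_nil|rewrite subn0 mul1n].
  + by move: Hd; rewrite Hq Hst bval_nseq0 => -[].
rewrite size_pmap_g2_cons /= => /andP[/eqP Hn' Hall] /andP[Ho Hok] Hlast Hd.
rewrite steps_word_cons => /(run_cat_inv (M := dfs_pda))[q2 [st2 [H1 H2]]] Hqf.
have Hlt m : size m = l -> bval m < N by move=> <-; exact: bval_ltn.
have Hones m : size m = l -> all id m = ((bval m).+1 == N) by move=> <-; exact: bval_all.
have [Hd2 Hpb] : depth_ok (phase_of q2) (bval n') st2 /\
    pulls_back (phase_of q) (bval n) st (phase_of q2) (bval n') st2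
      (if o is inr _ then 1 else 0).
  case: o Ho H1 => [[| | | ]|g] //=.
  - move=> /andP[_ /eqP Hv] H1; rewrite Hv in H1 *.
    by apply: block_inc Hd H1; rewrite -Hv; exact: Hlt.
  - move=> /andP[_ /eqP Hv] H1; rewrite -Hv in Hd *.
    apply: block_dec Hd H1; first by rewrite Hv; exact: Hlt.
    by rewrite Hones // Hv neq_ltn Hlt.
  - move=> /eqP Hv H1; rewrite Hv in H1 *.
    by apply: block_g2 Hd H1; rewrite Hones // Hv.
have [x2 Hx2 Hsum] := IH _ _ _ Hn' Hall Hok Hlast Hd2 H2 Hqf.
have [x Hx Ex2] := Hpb _ Hx2.
by exists x => //; rewrite addnA -Ex2.
Qed.

Lemma accepted_size w : accepts dfs_pda w -> Lprime l w -> size (proj2 w) = 2 ^ N.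
Proof.
case=> qf [Hqf Hr] [n0 [steps [[Hn0 Hall] En0 Hlast Hok Ew]]]; subst w.
have {}Hqf : phase_of qf = Up by move: Hqf => /=; case: phase_of.
have [q1 [st1 [H1 {}Hr]]] := run_cat_inv Hr.
have [Hq1 Est1] := run_bits_inert (q := state Down) isT H1; subst st1.
have Hd : depth_ok (phase_of q1) (bval n0) [::] by rewrite Hq1 En0 bval_nseq0.
have [x Hx <-] := run_steps_leaves Hn0 Hall Hok Hlast Hd Hr Hqf.
move: Hx; rewrite Hq1 En0 bval_nseq0 => -[bs /size0nil -> [[_ ->]|[st' //]]].
by rewrite proj2_cat proj2_enc_bits proj2_steps_word.
Qed.

Lemma step_ok_inc v : v.+1 < N ->
  step_ok l (inl Inc : letter G2) (bits_of l v) (bits_of l v.+1).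
Proof.
move=> Hv; rewrite /= !bval_bits_of ?eqxx ?andbT; [|lia|lia].
have : ~~ all id (bits_of l v) by rewrite bval_all size_bits_of bval_bits_of; lia.
by apply: contraNneq => ->; rewrite all_nseq orbT.
Qed.

Lemma step_ok_dec v : v.+1 < N ->
  step_ok l (inl Dec : letter G2) (bits_of l v.+1) (bits_of l v).
Proof.
move=> Hv; rewrite /= !bval_bits_of ?eqxx ?andbT; [|lia|lia].
by apply/eqP => /(congr1 bval); rewrite bval_nseq0 bval_bits_of.
Qed.

Fixpoint dfs_steps (k v : nat) (u : seq G2) : seq (letter G2 * seq bool) :=
  if k is k'.+1 then
    ((inl Inc : letter G2), bits_of l v.+1) :: dfs_steps k' v.+1 (take (2 ^ k) u)
    ++ ((inl Dec : letter G2), bits_of l v) :: ((inl Inc : letter G2), bits_of l v.+1)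
    :: dfs_steps k' v.+1 (drop (2 ^ k) u) ++ [:: ((inl Dec : letter G2), bits_of l v)]
  else [seq ((inr g : letter G2), bits_of l v) | g <- u].

Lemma size_take_half k (u : seq G2) : size u = 2 ^ k.+1 -> size (take (2 ^ k) u) = 2 ^ k.
Proof. by move=> Hu; rewrite size_take Hu ltn_exp2l // ltnSn. Qed.

Lemma size_drop_half k (u : seq G2) : size u = 2 ^ k.+1 -> size (drop (2 ^ k) u) = 2 ^ k.
Proof. by move=> Hu; rewrite size_drop Hu expnS; lia. Qed.

Lemma dfs_steps_sizes k v u : all (fun p => size p.2 == l) (dfs_steps k v u).
Proof.
elim: k v u => [|k IH] v u /=; first by elim: u => //= g u ->; rewrite size_bits_of eqxx.
by rewrite all_cat IH /= all_cat IH /= !size_bits_of eqxx.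
Qed.

Lemma dfs_steps_last k v u n : size u = 2 ^ k.+1 ->
  last n (map snd (dfs_steps k v u)) = bits_of l v.
Proof.
case: k => [|k] /= Hu; first by case: u Hu => [|g1 [|g2 [|]]].
by rewrite map_cat /= map_cat last_cat /= last_cat.
Qed.

Lemma dfs_steps_g2 k v u : pmap (@g2_of_step G2) (dfs_steps k v u) = u.
Proof.
elim: k v u => [|k IH] v u /=; first by elim: u => //= g u ->.
by rewrite pmap_cat /= pmap_cat /= !IH cats0 cat_take_drop.
Qed.

Lemma dfs_steps_ok k v u : v + k.+1 = N -> size u = 2 ^ k.+1 ->
  steps_ok l (bits_of l v) (dfs_steps k v u).
Proof.
elim: k v u => [|k IH] v u Hvk Hu; first by elim: u {Hu} => //= g u ->; rewrite eqxx.
have Hv : v.+1 < N by lia.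
rewrite [dfs_steps _ _ _]/= steps_ok_cons step_ok_inc // steps_ok_cat.
rewrite IH ?(size_take_half Hu) ?dfs_steps_last ?(size_take_half Hu) //; last by lia.
rewrite !steps_ok_cons step_ok_dec // step_ok_inc // steps_ok_cat.
rewrite IH ?(size_drop_half Hu) ?dfs_steps_last ?(size_drop_half Hu) //; last by lia.
by rewrite steps_ok_cons step_ok_dec.
Qed.

Lemma dfs_steps_run k v u st : v + k.+1 = N -> size u = 2 ^ k.+1 ->
  run (state Down) st (steps_word (dfs_steps k v u)) (state Up) st.
Proof.
elim: k v u st => [|k IH] v u st Hvk Hu.
- case: u Hu => [|g1 [|g2 [|]]] // _.
  have Hones : all id (bits_of l v) by rewrite bval_all size_bits_of bval_bits_of; lia.
  rewrite [dfs_steps _ _ _]/= !steps_word_cons [steps_word [::]]/= cats0.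
  apply: (run_read (o := Push sedge) (q1 := state Turn)) => //.
  apply: run_cat (run_bits_turn_ones _ Hones) _.
  apply: (run_read (o := Pop sedge) (q1 := state Up)) => //.
  exact: (@run_bits_stay Up _ _ isT).
- have Hv : v.+1 < N by lia.
  have Hnot : ~~ all id (bits_of l v) by rewrite bval_all size_bits_of bval_bits_of; lia.
  have Hne : bits_of l v != [::].
    by rewrite -size_eq0 size_bits_of; apply: contraTneq Hv => ->.
  rewrite [dfs_steps _ _ _]/= !(steps_word_cat, steps_word_cons).
  rewrite [steps_word [::]]/= cats0.
  apply: (run_read (o := Push sedge) (q1 := state Down)) => //.
  apply: run_cat (@run_bits_stay Down _ _ isT) _.
  apply: run_cat (IH _ _ _ _ (size_take_half Hu)) _; first by lia.
  apply: (run_read (o := Pop sedge) (q1 := state Turn)) => //.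
  apply: run_cat (run_bits_turn_zero _ Hnot) _.
  apply: (run_read (o := Push sedge) (q1 := state Down)) => //.
  apply: run_cat (@run_bits_stay Down _ _ isT) _.
  apply: run_cat (IH _ _ _ _ (size_drop_half Hu)) _; first by lia.
  apply: (run_read (o := Pop sedge) (q1 := state Turn)) => //.
  exact: run_bits_turn_pop.
Qed.

Lemma traversal_accepted u : size u = 2 ^ N ->
  exists w, [/\ accepts dfs_pda w, Lprime l w & proj2 w = u].
Proof.
move=> Hu; have HN : 0 < N by rewrite expn_gt0.
have Hu' : size u = 2 ^ N.-1.+1 by rewrite prednK.
have Hk : 0 + N.-1.+1 = N by rewrite add0n prednK.
exists (enc_bits G2 (nseq l false) ++ steps_word (dfs_steps N.-1 0 u)); split.
- exists (state Up); split=> //.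
  exact: run_cat (@run_bits_stay Down _ _ isT) (dfs_steps_run _ Hk Hu').
- exists (nseq l false), (dfs_steps N.-1 0 u); split=> //.
  + by rewrite size_nseq dfs_steps_sizes.
  + by rewrite dfs_steps_last // bits_of0.
  + by rewrite -bits_of0; exact: dfs_steps_ok.
- by rewrite proj2_cat proj2_enc_bits proj2_steps_word dfs_steps_g2.
Qed.

End Machine.

Theorem claim4p9 (l : nat) (G2 : finType) (hG2 : 0 < #|G2|) :
  exists M : pda 'I_3 'I_2 (letter G2),
    forall u : seq G2,
      (exists w : seq (letter G2), [/\ accepts M w, Lprime l w & proj2 w = u])
      <-> size u = 2 ^ (2 ^ l).
Proof.
exists (dfs_pda G2) => u; split; last exact: traversal_accepted.
by case=> w [Hacc HL <-]; exact: accepted_size Hacc HL.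
Qed.
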